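(* Let $\mathcal{T}$ be a finite tree, $w:V(\mathcal{T})\to\mathbb{R}_{\ge0}$, and let $C$ be a centroid tree of $(\mathcal{T},w)$. For every $\varepsilon>0$ there is a weight function $w':V(\mathcal{T})\to\mathbb{R}_{\ge0}$ with $\|w'-w\|_\infty<\varepsilon$ such that $C$ is the unique centroid tree of $(\mathcal{T},w')$.
   Context: For a subgraph $\mathcal{H}$, $w(\mathcal{H})=\sum_{x\in V(\mathcal{H})}w(x)$. A search tree on a tree $\mathcal{T}$ is a rooted tree $T$ with vertex set $V(\mathcal{T})$ defined recursively: its root is an arbitrary vertex $r$, and the children of $r$ are the roots of search trees built on the connected components of $\mathcal{T}-r$; a single-vertex tree has only itself as search tree. A vertex $v$ is a centroid of $(\mathcal{T},w)$ if each component $\mathcal{H}$ of $\mathcal{T}-v$ has $w(\mathcal{H})\le w(\mathcal{T})/2$. A search tree $T$ is a centroid tree if each vertex $x$ is a centroid of $(\mathcal{T}[V(T_x)],w)$, $T_x$ being the subtree of $T$ rooted at $x$. *)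

From HB Require Import structures.
From mathcomp Require Import all_boot all_order all_algebra.
From mathcomp Require Import reals.
Set Implicit Arguments. Unset Strict Implicit. Unset Printing Implicit Defensive.
Import Order.TTheory GRing.Theory Num.Theory.
Local Open Scope ring_scope.

Definition is_tree (V : finType) (e : rel V) : Prop :=
  [/\ 0 < #|V|, symmetric e, irreflexive e,
      (forall x y, connect e x y) &
      (* acyclic: no graph cycle (>= 3 distinct vertices, closed e-walk) *)
      (forall s : seq V, uniq s -> 2 < size s -> ~~ cycle e s)]%N.

Definition induced_rel (V : finType) (e : rel V) (S : {set V}) : rel V :=
  fun a b => [&& a \in S, b \in S & e a b].

Definition conn_in (V : finType) (e : rel V) (S : {set V}) : Prop :=
  forall x y, x \in S -> y \in S -> connect (induced_rel e S) x y.

Definition component (V : finType) (e : rel V) (S C : {set V}) : Prop :=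
  [/\ C \subset S, C != set0, conn_in e C &
      forall x y, x \in C -> y \in S :\: C -> ~~ e x y].

Definition wsum (R : realType) (V : finType) (w : V -> R) (S : {set V}) : R :=
  \sum_(x in S) w x.

Definition is_centroid (R : realType) (V : finType) (e : rel V) (w : V -> R)
    (S : {set V}) (v : V) : Prop :=
  v \in S /\
  forall H, component e (S :\ v) H -> wsum w H <= wsum w S / 2.

(* Rooted trees on vertex set V are given by a parent function
   p : V -> option V (None = root). *)
Definition par_rel (V : finType) (p : V -> option V) : rel V :=
  fun y z => p y == Some z.

Definition desc (V : finType) (p : V -> option V) (x : V) : {set V} :=
  [set y | connect (par_rel p) y x].

Definition rooted_tree (V : finType) (p : V -> option V) : Prop :=
  exists r, p r = None /\ forall v, connect (par_rel p) v r.

(* Search tree on T (unfolded recursive definition): p is a rooted tree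
   on V(T) and for every vertex x, the subtrees of the children of x are
   exactly the connected components of T[V(T_x)] - x. (Since the subtrees
   of the children of x partition V(T_x) \ x, it suffices to require that
   each of them is a component.) *)
Definition search_tree (V : finType) (e : rel V) (p : V -> option V) : Prop :=
  rooted_tree p /\
  forall x c, p c = Some x -> component e (desc p x :\ x) (desc p c).

Definition centroid_tree (R : realType) (V : finType) (e : rel V)
    (w : V -> R) (p : V -> option V) : Prop :=
  search_tree e p /\ forall x, is_centroid e w (desc p x) x.

From HB Require Import structures.
From mathcomp Require Import all_boot all_order all_algebra.
From mathcomp Require Import reals.
From mathcomp Require Import ring lra.
Import Order.TTheory GRing.Theory Num.Theory.
Local Open Scope ring_scope.
Set Implicit Arguments. Unset Strict Implicit.

(* Call x a strict centroid of S when every component of S - x weighs strictly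
   less than half of S. A strict centroid is the only centroid: for another
   centroid v, the component K of S - x containing v has weight < w(S)/2, while
   S \ K lies in the component of S - v containing x, which therefore weighs
   > w(S)/2. Adding to w(v) a tiny multiple of M^|V(C_v)| with M > |V| makes
   every vertex a strict centroid of its subtree in C, since the subtree below
   x then weighs less than x alone in the perturbation. Once all centroids
   are unique, any centroid tree C' agrees with C: the roots coincide, and
   descending along C' each child's subtree is a common component, whose
   unique centroid is the child in both trees. *)

Section InducedSubgraphs.
Variables (V : finType) (e : rel V).

Lemma connect_closed_in (r : rel V) (A : {set V}) a b :
  (forall u v, u \in A -> r u v -> v \in A) ->
  a \in A -> connect r a b -> b \in A.
Proof.
move=> closedA aA /connectP [s ps ->]; elim: s a aA ps => [|z s IH] a aA //=.
by case/andP=> raz; apply: IH; apply: closedA raz.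
Qed.

Lemma connect_restrict (r r' : rel V) (A : {set V}) a b :
  (forall u v, u \in A -> r u v -> (v \in A) && r' u v) ->
  a \in A -> connect r a b -> connect r' a b.
Proof.
move=> restrA aA /connectP [s ps ->]; elim: s a aA ps => [|z s IH] a aA //=.
case/andP=> raz ps; case/andP: (restrA _ _ aA raz) => zA r'az.
exact: connect_trans (connect1 r'az) (IH _ zA ps).
Qed.

Lemma induced_rel_sym (S : {set V}) :
  symmetric e -> symmetric (induced_rel e S).
Proof. by move=> se a b; rewrite /induced_rel se andbCA. Qed.

Lemma connect_induced_subset (A B : {set V}) a b :
  A \subset B -> connect (induced_rel e A) a b -> connect (induced_rel e B) a b.
Proof.
move=> AB; apply: connect_sub => u v /and3P [uA vA euv]; apply: connect1.
by rewrite /induced_rel (subsetP AB _ uA) (subsetP AB _ vA).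
Qed.

Lemma component_subset (S H1 H2 : {set V}) h :
  component e S H1 -> component e S H2 -> h \in H1 -> h \in H2 ->
  H1 \subset H2.
Proof.
case=> sH1 _ connH1 _ [_ _ _ sepH2] h1 h2; apply/subsetP => y y1.
apply: connect_closed_in h2 (connH1 _ _ h1 y1) => u v uH2 /and3P [_ vH1 euv].
apply/negPn/negP => vH2.
have : v \in S :\: H2 by rewrite inE vH2 (subsetP sH1).
by move/(sepH2 _ _ uH2); rewrite euv.
Qed.

Lemma component_eq (S H1 H2 : {set V}) h :
  component e S H1 -> component e S H2 -> h \in H1 -> h \in H2 -> H1 = H2.
Proof.
move=> c1 c2 h1 h2; apply/eqP; rewrite eqEsubset.
by rewrite (component_subset c1 c2 h1 h2) (component_subset c2 c1 h2 h1).
Qed.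

(* A path from a component K of S - x to x must leave K through x. *)
Lemma component_connect_cut (S K : {set V}) x y :
  conn_in e S -> x \in S -> component e (S :\ x) K -> y \in K ->
  connect (induced_rel e (x |: K)) y x.
Proof.
move=> connS xS [sK _ _ sepK] yK.
have yS : y \in S by have := subsetP sK _ yK; rewrite inE => /andP [].
case/connectP: (connS _ _ yS xS) => s ps yx.
elim: s y yK {yS} ps yx => [|b s IH] y yK /=.
  by move=> _ yx; have := subsetP sK _ yK; rewrite -yx !inE eqxx.
case/andP=> /and3P [_ bS eyb] ps bx.
have yxK : y \in x |: K by rewrite inE yK orbT.
have [b_eq_x | b_neq_x] := eqVneq b x.
  by apply: connect1; rewrite /induced_rel yxK setU11 -b_eq_x eyb.
have [bK | bNK] := boolP (b \in K).
  apply: connect_trans (connect1 _) (IH _ bK ps bx).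
  by rewrite /induced_rel yxK inE bK orbT eyb.
have : b \in (S :\ x) :\: K by rewrite !inE bNK b_neq_x bS.
by move/(sepK _ _ yK); rewrite eyb.
Qed.

Definition comp_of (T : {set V}) (x : V) : {set V} :=
  [set y | connect (induced_rel e T) x y].

Hypothesis se : symmetric e.

Lemma comp_of_component (T : {set V}) x :
  x \in T -> component e T (comp_of T x).
Proof.
move=> xT.
have sub : comp_of T x \subset T.
  apply/subsetP => y; rewrite inE.
  by apply: connect_closed_in xT => u v _ /and3P [].
split=> //.
- by apply/set0Pn; exists x; rewrite inE connect0.
- move=> a b; rewrite !inE => xa xb.
  have ab : connect (induced_rel e T) a b.
    by apply: connect_trans _ xb; rewrite (sym_connect_sym (induced_rel_sym T se)).
  apply: (connect_restrict (A := comp_of T x)) ab; last by rewrite inE.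
  move=> u v; rewrite !inE => xu uv.
  have xv := connect_trans xu (connect1 uv).
  by case/and3P: uv => _ _ euv; rewrite /induced_rel !inE xu xv euv.
- move=> y z yx; have yT := subsetP sub _ yx; move: yx.
  rewrite !inE => xy /andP [xNz zT]; apply/negP => eyz.
  move/negP: xNz; apply; apply: connect_trans xy (connect1 _).
  by rewrite /induced_rel yT zT eyz.
Qed.

Lemma comp_of_self (T : {set V}) x : x \in comp_of T x.
Proof. by rewrite inE connect0. Qed.

Lemma setD_comp_of_subset (S : {set V}) x v :
  conn_in e S -> x \in S -> v \in S :\ x ->
  S :\: comp_of (S :\ x) v \subset comp_of (S :\ v) x.
Proof.
move=> connS xS vSx; have /setD1P [v_neq_x vS] := vSx.
have cK := comp_of_component vSx.
apply/subsetP => y /setDP [yS yNK].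
have [-> | y_neq_x] := eqVneq y x; first by rewrite comp_of_self.
have ySx : y \in S :\ x by rewrite in_setD1 y_neq_x.
have cKy := comp_of_component ySx.
have vNKy : v \notin comp_of (S :\ x) y.
  apply: contra yNK => vKy.
  by rewrite -(component_eq cKy cK vKy (comp_of_self _ _)) comp_of_self.
have xKy_sub : x |: comp_of (S :\ x) y \subset S :\ v.
  apply/subsetP => z /setU1P [-> | zKy].
    by rewrite in_setD1 eq_sym v_neq_x.
  case: cKy => sKy _ _ _; case/setD1P: (subsetP sKy _ zKy) => _ zS.
  by rewrite in_setD1 zS andbT; apply: contraNneq vNKy => <-.
rewrite inE (sym_connect_sym (induced_rel_sym _ se)).
have := component_connect_cut connS xS cKy (comp_of_self _ _).
exact: connect_induced_subset xKy_sub.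
Qed.

End InducedSubgraphs.

Definition strict_centroid (R : realType) (V : finType) (e : rel V)
    (w : V -> R) (S : {set V}) (x : V) : Prop :=
  x \in S /\
  forall H, component e (S :\ x) H -> wsum w H < wsum w S / 2.

Section Centroids.
Variables (R : realType) (V : finType) (e : rel V) (w : V -> R).
Hypothesis w_ge0 : forall v, 0 <= w v.

Lemma wsum_le_subset (A B : {set V}) : A \subset B -> wsum w A <= wsum w B.
Proof.
move=> AB; rewrite /wsum [X in _ <= X](big_setID A) /= (setIidPr AB) lerDl.
exact: sumr_ge0.
Qed.

Lemma wsum_setD (A B : {set V}) :
  B \subset A -> wsum w A = wsum w B + wsum w (A :\: B).
Proof. by move=> BA; rewrite /wsum (big_setID B) /= (setIidPr BA). Qed.

Lemma strict_centroid_centroid S x :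
  strict_centroid e w S x -> is_centroid e w S x.
Proof. by case=> xS lt_half; split=> // H /lt_half /ltW. Qed.

Lemma strict_centroid_unique S x v :
  symmetric e -> conn_in e S -> strict_centroid e w S x ->
  is_centroid e w S v -> v = x.
Proof.
move=> se connS [xS lt_half] [vS le_half].
have [// | v_neq_x] := eqVneq v x.
have vSx : v \in S :\ x by rewrite in_setD1 v_neq_x.
have xSv : x \in S :\ v by rewrite in_setD1 eq_sym v_neq_x.
have [sK _ _ _] := comp_of_component se vSx.
have KS : comp_of e (S :\ x) v \subset S := subset_trans sK (subD1set _ _).
have lt_K := lt_half _ (comp_of_component se vSx).
have le_H := le_half _ (comp_of_component se xSv).
have le_D := wsum_le_subset (setD_comp_of_subset se connS xS vSx).
exfalso; move: lt_K le_H le_D; rewrite (wsum_setD KS); lra.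
Qed.

End Centroids.

Section RootedTrees.
Variables (V : finType) (p : V -> option V).

Lemma desc_self x : x \in desc p x.
Proof. by rewrite inE connect0. Qed.

Lemma desc_child x y :
  y \in desc p x -> y != x -> exists2 c, p c = Some x & y \in desc p c.
Proof.
rewrite inE => /connectP [s ps ->]; elim/last_ind: s ps => [|s z _] /=.
  by rewrite eqxx.
rewrite rcons_path last_rcons => /andP [ps pz] _.
by exists (last y s); [exact/eqP | rewrite inE; apply/connectP; exists s].
Qed.

Lemma desc_subset x y : y \in desc p x -> desc p y \subset desc p x.
Proof.
rewrite inE => yx; apply/subsetP => z; rewrite !inE => zy.
exact: connect_trans zy yx.
Qed.

Let up (v : V) : V := odflt v (p v).

Lemma par_connect_iter a b : connect (par_rel p) a b -> exists n, iter n up a = b.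
Proof.
move=> ab; have : fconnect up a b.
  apply: connect_sub ab => u v /eqP puv; apply: connect1.
  by rewrite /frel /up /= puv.
by move=> fab; exists (findex up a b); apply: iter_findex.
Qed.

Lemma iter_cycle_fixpoint (T : Type) (f : T -> T) z r q k :
  (0 < q)%N -> iter q f z = z -> iter k f z = r -> f r = r -> z = r.
Proof.
move=> q_gt0 zq zk fr.
have iter_mul t : iter (t * q) f z = z.
  by elim: t => [|t IH] //; rewrite mulSn iterD IH zq.
rewrite -(iter_mul k) -(subnK (leq_pmulr k q_gt0)) iterD zk; exact: iter_fix.
Qed.

Hypothesis rooted : rooted_tree p.

(* The parent map has a single fixpoint, the root, which every orbit reaches;
   so a parent cycle would have to pass through the root. *)
Lemma par_connect_antisym x y :
  connect (par_rel p) y x -> connect (par_rel p) x y -> y = x.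
Proof.
case: rooted => r [pr to_r] /par_connect_iter [n yx] /par_connect_iter [m xy].
have up_r : up r = r by rewrite /up pr.
have [/eqP | nm_gt0] := posnP (n + m).
  by rewrite addn_eq0 => /andP [/eqP n0 _]; rewrite -yx n0.
have [k xr] := par_connect_iter (to_r x).
have [k' yr] := par_connect_iter (to_r y).
rewrite (iter_cycle_fixpoint nm_gt0 _ xr up_r); last by rewrite iterD xy yx.
by rewrite (iter_cycle_fixpoint nm_gt0 _ yr up_r) // addnC iterD yx xy.
Qed.

Lemma desc_subsetD1 x y : y \in desc p x :\ x -> desc p y \subset desc p x :\ x.
Proof.
case/setD1P => y_neq_x yx; apply/subsetP => z zy.
rewrite in_setD1 (subsetP (desc_subset yx)) // andbT.
apply: contraNneq y_neq_x => zx; apply/eqP; move: yx zy; rewrite zx !inE.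
exact: par_connect_antisym.
Qed.

Lemma desc_root x : p x = None -> desc p x = setT.
Proof.
case: rooted => r [_ to_r] px; apply/setP => v; rewrite !inE.
suff -> : x = r by rewrite to_r.
by case/connectP: (to_r x) => [[|z s]] //= /andP [/eqP]; rewrite px.
Qed.

End RootedTrees.

Lemma search_tree_conn_desc (V : finType) (e : rel V) (p : V -> option V) x :
  is_tree e -> search_tree e p -> conn_in e (desc p x).
Proof.
case=> _ _ _ conn _ [rooted child_comp].
case px: (p x) => [y|]; first by case: (child_comp _ _ px).
move=> a b _ _; rewrite (desc_root rooted px).
by rewrite (@eq_connect _ _ e) // => u v; rewrite /induced_rel !in_setT.
Qed.

Definition desc_pow {R : numDomainType} (V : finType) (p : V -> option V)
    (v : V) : R :=
  (#|V|.+1)%:R ^+ #|desc p v|.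

Section DescPow.
Variables (R : numDomainType) (V : finType) (p : V -> option V).
Local Notation M := ((#|V|.+1)%:R : R).

Let M_ge1 : 1 <= M. Proof. by rewrite ler1n. Qed.

Lemma desc_pow_gt0 v : 0 < desc_pow p v :> R.
Proof. by rewrite exprn_gt0 // (lt_le_trans ltr01 M_ge1). Qed.

Lemma desc_pow_le v : desc_pow p v <= M ^+ #|V|.
Proof. by rewrite ler_weXn2l ?M_ge1 ?max_card. Qed.

(* Each of the at most |V| proper descendants of x contributes at most
   M^(|V(C_x)| - 1), and M exceeds their number. *)
Lemma sum_desc_pow_lt x :
  rooted_tree p -> \sum_(y in desc p x :\ x) desc_pow p y < desc_pow p x :> R.
Proof.
move=> rooted; set m := #|desc p x :\ x|.
have -> : desc_pow p x = M ^+ m.+1 by rewrite /desc_pow (cardsD1 x) desc_self.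
apply: (@le_lt_trans _ _ (\sum_(y in desc p x :\ x) M ^+ m)).
  apply: ler_sum => y yx; apply: ler_weXn2l; first exact: M_ge1.
  exact: subset_leq_card (desc_subsetD1 rooted yx).
rewrite sumr_const -(mulr_natr (M ^+ m)) exprSr ltr_pM2l.
  by rewrite ltr_nat ltnS max_card.
by rewrite exprn_gt0 // (lt_le_trans ltr01 M_ge1).
Qed.

End DescPow.

Lemma wsum_add_scale (R : realType) (V : finType) (w a : V -> R) (d : R) A :
  wsum (fun v => w v + d * a v) A = wsum w A + d * wsum a A.
Proof. by rewrite /wsum big_split /= mulr_sumr. Qed.

Lemma perturbed_strict_centroid (R : realType) (V : finType) (e : rel V)
    (w : V -> R) (C : V -> option V) (d : R) x :
  rooted_tree C -> 0 < d -> is_centroid e w (desc C x) x ->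
  strict_centroid e (fun v => w v + d * desc_pow C v) (desc C x) x.
Proof.
move=> rooted d_gt0 [xC le_half]; split=> // H cH.
have [HC _ _ _] := cH.
have pow_ge0 v : 0 <= desc_pow C v :> R by apply: ltW; apply: desc_pow_gt0.
have le_H := wsum_le_subset pow_ge0 HC.
have lt_sub : wsum (desc_pow C) (desc C x :\ x) < desc_pow C x :> R.
  exact: sum_desc_pow_lt.
have split_x : wsum (desc_pow C) (desc C x)
    = desc_pow C x + wsum (desc_pow C) (desc C x :\ x) :> R.
  by rewrite /wsum (big_setD1 x xC).
have lt_pow : d * wsum (desc_pow C) H < d * (wsum (desc_pow C) (desc C x) / 2).
  by rewrite ltr_pM2l // split_x; lra.
move: lt_pow (le_half H cH); rewrite !wsum_add_scale mulrA; lra.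
Qed.

Section CentroidTreeUniqueness.
Variables (R : realType) (V : finType) (e : rel V) (w : V -> R).
Variables (C C' : V -> option V).
Hypotheses (w_ge0 : forall v, 0 <= w v) (tree : is_tree e).
Hypothesis searchC : search_tree e C.
Hypothesis strictC : forall x, strict_centroid e w (desc C x) x.
Hypothesis centroidC' : centroid_tree e w C'.

Let centroid_of_desc x v : is_centroid e w (desc C x) v -> v = x.
Proof.
have [_ se _ _ _] := tree.
have connC := search_tree_conn_desc (x := x) tree searchC.
exact: (strict_centroid_unique w_ge0 se connC (strictC x)).
Qed.

Lemma centroid_trees_root_agree r :
  C' r = None -> desc C' r = desc C r /\ C' r = C r.
Proof.
move=> C'r; have [[rootedC' _] centC'] := centroidC'.
have [rootedC _] := searchC.
have [r0 [Cr0 _]] := rootedC.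
have descC' : desc C' r = desc C r0 by rewrite (desc_root rootedC' C'r) desc_root.
have r_eq : r = r0 by apply: centroid_of_desc; rewrite -descC'; apply: centC'.
by rewrite descC' C'r r_eq Cr0.
Qed.

Lemma centroid_trees_child_agree z c :
  desc C' z = desc C z -> C' c = Some z -> desc C' c = desc C c /\ C' c = C c.
Proof.
move=> desc_z C'c; have [[_ childC'] centC'] := centroidC'.
have [_ childC] := searchC.
have compC' := childC' _ _ C'c; rewrite desc_z in compC'.
have cz : c \in desc C z :\ z.
  by case: compC' => sub _ _ _; apply: (subsetP sub) (desc_self _ _).
have /setD1P [c_neq_z czC] := cz.
have [c0 Cc0 cc0] := desc_child czC c_neq_z.
have desc_c := component_eq compC' (childC _ _ Cc0) (desc_self _ _) cc0.
have c_eq : c = c0 by apply: centroid_of_desc; rewrite -desc_c; apply: centC'.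
by rewrite desc_c C'c c_eq Cc0.
Qed.

Lemma centroid_tree_unique : C' =1 C.
Proof.
have [[[r [C'r to_r]] _] _] := centroidC'.
move=> v; suff [] : desc C' v = desc C v /\ C' v = C v by [].
case/connectP: (to_r v) => s; elim: s v => [|z s IH] v /=.
  by move=> _ <-; apply: centroid_trees_root_agree.
case/andP=> /eqP C'v path_z r_last.
have [desc_z _] := IH z path_z r_last.
exact: centroid_trees_child_agree desc_z C'v.
Qed.

End CentroidTreeUniqueness.

Theorem mainTheorem18 (R : realType) (V : finType) (e : rel V)
  (w : V -> R) (C : V -> option V) :
  is_tree e ->
  (forall v, 0 <= w v) ->
  centroid_tree e w C ->
  forall eps : R, 0 < eps ->
  exists w' : V -> R,
    [/\ (forall v, 0 <= w' v),
        (forall v, `|w' v - w v| < eps),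
        centroid_tree e w' C &
        (forall C' : V -> option V, centroid_tree e w' C' -> C' =1 C)].
Proof.
move=> tree w_ge0 [searchC centC] eps eps_gt0.
pose P : R := (#|V|.+1)%:R ^+ #|V|.
have P_gt0 : 0 < P by rewrite exprn_gt0.
pose d := eps / (P *+ 2).
have d_gt0 : 0 < d by rewrite divr_gt0 // mulrn_wgt0.
have dP : d * P = eps / 2 by rewrite /d -mulr_natr; field; rewrite gt_eqF.
pose w' v := w v + d * desc_pow C v.
have shift_ge0 v : 0 <= d * desc_pow C v by rewrite mulr_ge0 ?ltW ?desc_pow_gt0.
have w'_ge0 v : 0 <= w' v by rewrite addr_ge0.
have strict x : strict_centroid e w' (desc C x) x.
  exact: perturbed_strict_centroid searchC.1 d_gt0 (centC x).
exists w'; split=> [v | v | | C' centC'].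
- exact: w'_ge0.
- rewrite /w' addrAC subrr add0r ger0_norm //.
  have := ler_wpM2l (ltW d_gt0) (desc_pow_le _ C v); rewrite dP; lra.
- by split=> // x; apply: strict_centroid_centroid.
- exact: centroid_tree_unique w'_ge0 tree searchC strict centC'.
Qed.
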